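(* Let $p$ be an odd prime and let $a\in\mathbb{F}_p$ with $a^5\not\equiv a \pmod p$. Let $E/\mathbb{F}_p$ be the elliptic curve given by the Edwards model $X^2+Y^2=a^2(1+X^2Y^2)$. Then \[|E(\mathbb{F}_p)|=1+p+p\cdot{_2F_1}\left(\begin{matrix}\phi&\phi \\ {} & \epsilon\end{matrix}\Big| 1-a^4\right).\]
   Context: $|E(\mathbb{F}_p)|$ is the number of $\mathbb{F}_p$-rational points of the elliptic curve (the smooth projective curve birational to the given affine model). Multiplicative characters $\chi$ of $\mathbb{F}_p^\times$ are extended by $\chi(0)=0$; $\epsilon$ is the trivial and $\phi$ the quadratic character; $\overline{\chi}=1/\chi$. For characters $A,B$: ${A\choose B}:=\frac{B(-1)}{p}\sum_{x\in\mathbb{F}_p}A(x)\overline{B}(1-x)$. The Gaussian hypergeometric series is \[{_2F_1}\left(\begin{matrix}\phi&\phi \\ {} & \epsilon\end{matrix}\Big| x\right):=\frac{p}{p-1}\sum_{\chi}{\phi\chi\choose\chi}{\phi\chi\choose\chi}\chi(x),\] the sum running over all multiplicative characters $\chi$ of $\mathbb{F}_p$. *)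

From HB Require Import structures.
From mathcomp Require Import all_boot all_order all_algebra all_fingroup all_solvable all_field all_character.
Set Implicit Arguments. Unset Strict Implicit. Unset Printing Implicit Defensive.
Import GRing.Theory Num.Theory.
Local Open Scope ring_scope.

(* Multiplicative characters of F_p^x, valued in algC, extended by chi(0)=0.
   The characters of the (abelian) finite group {unit 'F_p} are exactly its
   irreducible characters 'chi_i, i : Iirr [set: {unit 'F_p}]. *)
Definition FpUnits (p : nat) := [set: {unit 'F_p}]%G.

Definition mchar (p : nat) (i : Iirr (FpUnits p)) : 'F_p -> algC :=
  fun x => if @insub _ (fun y : 'F_p => y \is a GRing.unit) {unit 'F_p} x is Some u
           then 'chi_i u else 0.

Definition qchar (p : nat) : 'F_p -> algC :=
  fun x => if x == 0 then 0
           else if [exists y : 'F_p, y ^+ 2 == x] then 1 else -1.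

(* binomial coefficient of characters:
   (A choose B) = B(-1)/p * sum_x A(x) * Bbar(1-x), with Bbar = 1/B (and Bbar(0)=0) *)
Definition char_binom (p : nat) (A B : 'F_p -> algC) : algC :=
  B (-1) / p%:R * \sum_(x : 'F_p) A x * (B (1 - x))^-1.

Definition F21 (p : nat) (x : 'F_p) : algC :=
  p%:R / (p%:R - 1) *
  \sum_(i : Iirr (FpUnits p))
     char_binom (fun y => qchar y * mchar i y) (mchar i)
   * char_binom (fun y => qchar y * mchar i y) (mchar i)
   * mchar i x.

Definition edwards_affine_count (p : nat) (a : 'F_p) : nat :=
  #|[set P : 'F_p * 'F_p | P.1 ^+ 2 + P.2 ^+ 2 == a ^+ 2 * (1 + P.1 ^+ 2 * P.2 ^+ 2)]|.

(* F_p-points of the smooth projective model lying over the two points at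
   infinity (1:0:0) and (0:1:0) of the projective closure
   X^2 Z^2 + Y^2 Z^2 = a^2 (Z^4 + X^2 Y^2).  Each is an ordinary double point
   whose tangent cone is Z^2 - a^2 W^2 (W = Y resp. X); the rational points of
   the normalization above it correspond to the F_p-rational tangent
   directions (W:Z) = (1:t) with t^2 = a^2. *)
Definition edwards_infinity_count (p : nat) (a : 'F_p) : nat :=
  2 * #|[set t : 'F_p | t ^+ 2 == a ^+ 2]|.

Definition edwards_card (p : nat) (a : 'F_p) : nat :=
  edwards_affine_count a + edwards_infinity_count a.

From HB Require Import structures.
From mathcomp Require Import all_boot all_order all_algebra all_fingroup all_solvable all_field all_character.
From mathcomp Require Import ring zify.
Import GRing.Theory Num.Theory.
Local Open Scope ring_scope.
Set Implicit Arguments. Unset Strict Implicit.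

(* For fixed [Y] the Edwards equation is linear in [X^2],
   [X^2 (1 - a^2 Y^2) = a^2 - Y^2], so it has [1 + phi((a^2 - Y^2)(1 - a^2 Y^2))]
   solutions [X]; substituting [u = Y^2] and then [u = a^2 y], and letting the
   points at infinity compensate the constants, gives
   [|E(F_p)| = p + 1 + sum_y phi(y (1 - y) (1 - a^4 y))].
   On the other side, each character binomial in [2F1] is a sum over [y] of
   [phi(y) chi(y / (1 - y))], and orthogonality of the characters [chi] turns
   [p 2F1(x)] into the sum of [phi(y) phi(z)] over the solutions of
   [x y z = (1 - y)(1 - z)]; for [x = 1 - a^4] this is [z = (1 - y)/(1 - a^4 y)],
   which yields the same character sum. *)

Lemma natr_card_set (R : pzSemiRingType) (T : finType) (P : pred T) :
  #|[set t | P t]|%:R = \sum_t (P t)%:R :> R.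
Proof.
rewrite -sum1_card natr_sum big_mkcond /=; apply: eq_bigr => t _.
by rewrite inE; case: (P t).
Qed.

Lemma sum_mul_eq_indicator (R : pzSemiRingType) (T : finType) (f : T -> R) (t : T) :
  \sum_z f z * (z == t)%:R = f t.
Proof.
rewrite (bigD1 t) //= eqxx mulr1 big1 ?addr0 // => z /negbTE ->.
exact: mulr0.
Qed.

Section QuadraticCharacter.

Variable p : nat.
Hypotheses (p_pr : prime p) (p_odd : odd p).

Let h := p.-1./2.

Lemma double_half_pred : h.*2 = p.-1.
Proof.
have p_gt0 := prime_gt0 p_pr.
by rewrite /h -[RHS]odd_double_half -subn1 oddB // p_odd.
Qed.

Lemma half_pred_gt0 : (0 < h)%N.
Proof. by have := odd_prime_gt2 p_odd p_pr; rewrite /h half_gt0; lia. Qed.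

Lemma Fp_two_neq0 : (2%:R : 'F_p) != 0.
Proof.
rewrite -(dvdn_pcharf (pchar_Fp p_pr)) dvdn_prime2 //.
by apply: contraTneq p_odd => ->.
Qed.

Lemma Fp_N1_neq1 : (-1 : 'F_p) != 1.
Proof. by rewrite eq_sym -addr_eq0 -mulr2n Fp_two_neq0. Qed.

Lemma Fp_unit_generator :
  exists2 g : {unit 'F_p}, [set: {unit 'F_p}] = <[g]>%g & #[g]%g = p.-1.
Proof.
have [g Gg] := cyclicP (field_unit_group_cyclic [set: {unit 'F_p}]%G).
by exists g => //; rewrite orderE -Gg card_finField_unit card_Fp.
Qed.

Lemma Fp_expr_pred_eq1 (x : 'F_p) : x != 0 -> x ^+ p.-1 = 1.
Proof.
rewrite -unitfE => xU.
have := expg_cardG (in_setT (Sub x xU : {unit 'F_p})).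
rewrite card_finField_unit card_Fp // => /(congr1 val).
by rewrite FinRing.val_unitX.
Qed.

Lemma Fp_expr_half_pred_pm1 (x : 'F_p) : x != 0 -> (x ^+ h == 1) || (x ^+ h == -1).
Proof.
by move=> x0; rewrite -sqrf_eq1 -exprM muln2 double_half_pred Fp_expr_pred_eq1.
Qed.

Lemma Fp_Euler_criterion (x : 'F_p) : x != 0 ->
  [exists y, y ^+ 2 == x] = (x ^+ h == 1).
Proof.
move=> x0; apply/existsP/eqP => [[y /eqP yx]|xh].
  subst x; have y0 : y != 0 by apply: contraNneq x0 => ->; rewrite expr0n.
  by rewrite -exprM mul2n double_half_pred Fp_expr_pred_eq1.
have [g Gg og] := Fp_unit_generator.
have xU : x \is a GRing.unit by rewrite unitfE.
have /cycleP[k xk] : (Sub x xU : {unit 'F_p}) \in <[g]>%g by rewrite -Gg inE.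
have : ((g ^+ k) ^+ h == 1)%g.
  by rewrite -xk; apply/eqP/val_inj; rewrite FinRing.val_unitX /= xh.
rewrite -expgM -order_dvdn og -double_half_pred -mul2n.
rewrite dvdn_pmul2r ?half_pred_gt0 // => /dvdnP[m km].
by exists (val (g ^+ m)%g); rewrite -FinRing.val_unitX -expgM -km -xk.
Qed.

Lemma qchar0 : qchar (0 : 'F_p) = 0.
Proof. by rewrite /qchar eqxx. Qed.

Lemma qchar_Euler (x : 'F_p) : x != 0 -> qchar x = if x ^+ h == 1 then 1 else -1.
Proof. by move=> x0; rewrite /qchar (negbTE x0) Fp_Euler_criterion. Qed.

Lemma qchar_sqr (x : 'F_p) : x != 0 -> qchar (x ^+ 2) = 1.
Proof.
move=> x0; rewrite /qchar sqrf_eq0 (negbTE x0).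
by case: existsP => // -[]; exists x.
Qed.

Lemma qchar1 : qchar (1 : 'F_p) = 1.
Proof. by rewrite -(expr1n _ 2) qchar_sqr ?oner_neq0. Qed.

Lemma qcharM (x y : 'F_p) : qchar (x * y) = qchar x * qchar y.
Proof.
have [->|x0] := eqVneq x 0; first by rewrite mul0r qchar0 mul0r.
have [->|y0] := eqVneq y 0; first by rewrite mulr0 qchar0 mulr0.
rewrite !qchar_Euler ?mulf_neq0 // exprMn.
have N1 := Fp_N1_neq1.
by case/orP: (Fp_expr_half_pred_pm1 x0) => /eqP->;
   case/orP: (Fp_expr_half_pred_pm1 y0) => /eqP->;
   rewrite ?(mulr1, mul1r, mulrNN, eqxx, negbTE N1).
Qed.

Lemma qcharV (x : 'F_p) : qchar x^-1 = qchar x.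
Proof.
have [->|x0] := eqVneq x 0; first by rewrite invr0.
by rewrite -[LHS]mulr1 -(qchar_sqr x0) expr2 qcharM mulrA -qcharM mulVf ?qchar1 ?mul1r.
Qed.

Lemma qchar_nonsquare : exists n : 'F_p, qchar n = -1.
Proof.
have [g Gg og] := Fp_unit_generator.
have g0 : val g != 0 by rewrite -unitfE (valP g).
exists (val g); rewrite qchar_Euler //; case: ifP => // /eqP gh.
have : (g ^+ h == 1)%g by apply/eqP/val_inj; rewrite FinRing.val_unitX /= gh.
rewrite -order_dvdn og -double_half_pred => /(dvdn_leq half_pred_gt0).
by have := half_pred_gt0; lia.
Qed.

Lemma sum_qchar : \sum_(x : 'F_p) qchar x = 0.
Proof.
have [n qn] := qchar_nonsquare.
have n0 : n != 0 by apply: contra_eq_neq qn => ->; rewrite qchar0 eq_sym oppr_eq0 oner_eq0.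
have : \sum_(x : 'F_p) qchar x = - \sum_(x : 'F_p) qchar x.
  rewrite {1}(reindex_inj (mulfI n0)) -mulN1r -qn mulr_sumr /=.
  by apply: eq_bigr => x _; rewrite qcharM.
by move/eqP; rewrite -addr_eq0 -mulr2n mulrn_eq0 => /eqP.
Qed.


Lemma card_Fp_sqrt (w : 'F_p) :
  #|[set t : 'F_p | t ^+ 2 == w]|%:R = 1 + qchar w :> algC.
Proof.
have [->|w0] := eqVneq w 0.
  have -> : [set t : 'F_p | t ^+ 2 == 0] = [set 0].
    by apply/setP => t; rewrite !inE sqrf_eq0.
  by rewrite cards1 qchar0 addr0.
rewrite /qchar (negbTE w0); case: existsP => [[s /eqP sw]|no_root]; last first.
  rewrite (_ : [set t | _] = set0) ?cards0 ?subrr //.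
  by apply/setP => t; rewrite !inE; apply/negP => tw; apply: no_root; exists t.
have -> : [set t : 'F_p | t ^+ 2 == w] = [set s; -s].
  by apply/setP => t; rewrite !inE -sw eqf_sqr.
have s0 : s != 0 by apply: contraNneq w0 => s0; rewrite -sw s0 expr0n.
rewrite cards2 (_ : s != -s) //; apply: contra s0 => /eqP ss.
have : 2%:R * s == 0 by rewrite mulr_natl mulr2n {2}ss subrr.
by rewrite mulf_eq0 (negbTE Fp_two_neq0).
Qed.

Lemma sum_Fp_sqr (f : 'F_p -> algC) :
  \sum_y f (y ^+ 2) = \sum_u f u * (1 + qchar u).
Proof.
under [RHS]eq_bigr do rewrite -card_Fp_sqrt natr_card_set mulr_sumr.
rewrite exchange_big /=; apply: eq_bigr => t _.
by under eq_bigr do rewrite eq_sym; rewrite sum_mul_eq_indicator.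
Qed.

(* For [v != 0], [v (v + d) = v^2 (1 + d / v)], and [1 + d / v] runs over all
   of [F_p] except [1]. *)
Lemma sum_qchar_quadratic (r s : 'F_p) : r != s ->
  \sum_u qchar ((u - r) * (u - s)) = -1.
Proof.
rewrite -subr_eq0 => d0; set d := r - s.
have affine_inj : injective (fun w : 'F_p => 1 + d * w).
  by move=> w1 w2 /addrI /(mulfI d0).
have : \sum_w qchar (1 + d * w) = 0.
  by have := sum_qchar; rewrite (reindex_inj affine_inj).
rewrite (bigD1 0) //= mulr0 addr0 qchar1 addrC => /eqP; rewrite addr_eq0 => /eqP <-.
rewrite (reindex_inj (addIr r)) (bigD1 0) //= addrK mul0r qchar0 add0r.
rewrite [RHS](reindex_inj invr_inj) /=.
apply: eq_big => [v|v v0]; first by rewrite invr_eq0.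
have -> : (v + r - r) * (v + r - s) = v ^+ 2 * (1 + d * v^-1) by rewrite /d; field.
by rewrite qcharM qchar_sqr // mul1r.
Qed.

End QuadraticCharacter.

Section MultiplicativeCharacters.

Variable p : nat.
Implicit Type i : Iirr (FpUnits p).

Lemma mcharE i (u : {unit 'F_p}) : mchar i (val u) = 'chi_i u.
Proof. by rewrite /mchar valK. Qed.

Lemma mchar0 i : mchar i 0 = 0.
Proof. by rewrite /mchar insubN // unitr0. Qed.

Lemma abelian_FpUnits : abelian (FpUnits p).
Proof. exact/cyclic_abelian/field_unit_group_cyclic. Qed.

Lemma lin_char_FpUnits i : 'chi_i \is a linear_char.
Proof. exact/char_abelianP/abelian_FpUnits. Qed.

Lemma mchar1 i : mchar i 1 = 1.
Proof.
by rewrite -[1]/(val (1%g : {unit 'F_p})) mcharE lin_char1 ?lin_char_FpUnits.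
Qed.

Lemma mcharM i (x y : 'F_p) : mchar i (x * y) = mchar i x * mchar i y.
Proof.
have [->|x0] := eqVneq x 0; first by rewrite mul0r mchar0 mul0r.
have [->|y0] := eqVneq y 0; first by rewrite mulr0 mchar0 mulr0.
rewrite -!unitfE in x0 y0.
pose u : {unit 'F_p} := Sub x x0; pose v : {unit 'F_p} := Sub y y0.
rewrite -[x]/(val u) -[y]/(val v) -FinRing.val_unitM !mcharE.
by rewrite lin_charM ?lin_char_FpUnits ?inE.
Qed.

Lemma mcharV i (x : 'F_p) : mchar i x^-1 = (mchar i x)^-1.
Proof.
have [->|x0] := eqVneq x 0; first by rewrite invr0 mchar0 invr0.
by apply/esym/mulr1_eq; rewrite -mcharM mulfV ?mchar1.
Qed.

Hypothesis p_pr : prime p.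

Lemma sum_mchar (x : 'F_p) : \sum_i mchar i x = (p.-1)%:R *+ (x == 1).
Proof.
have [->|x0] := eqVneq x 0.
  by rewrite big1 ?(eq_sym 0) ?oner_eq0 // => i _; rewrite mchar0.
rewrite -unitfE in x0; set u : {unit 'F_p} := Sub x x0.
have -> : x = val u by [].
under eq_bigr do rewrite mcharE.
have := second_orthogonality_relation u (group1 (FpUnits p)).
rewrite (eq_bigr (fun i => 'chi_i u)) => [->|i _]; last first.
  by rewrite lin_char1 ?lin_char_FpUnits // conjC1 mulr1.
rewrite class1G inE -(inj_eq val_inj) /= (setIidPl _) ?card_finField_unit ?card_Fp //.
by rewrite sub_cent1 (subsetP abelian_FpUnits).
Qed.

End MultiplicativeCharacters.

Section EdwardsPointCount.

Variable p : nat.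
Hypotheses (p_pr : prime p) (p_odd : odd p).

Lemma card_edwards_fiber (c Y : 'F_p) : c ^+ 2 != 1 ->
  \sum_X (X ^+ 2 + Y ^+ 2 == c * (1 + X ^+ 2 * Y ^+ 2))%:R
  = 1 + qchar ((c - Y ^+ 2) * (1 - c * Y ^+ 2)) - (c * Y ^+ 2 == 1)%:R :> algC.
Proof.
move=> c2; set b := 1 - c * Y ^+ 2.
have linear_in_X2 X : (X ^+ 2 + Y ^+ 2 == c * (1 + X ^+ 2 * Y ^+ 2))
                      = (X ^+ 2 * b == c - Y ^+ 2).
  by rewrite -subr_eq0 -[RHS]subr_eq0 /b; congr (_ == 0); ring.
under eq_bigr do rewrite linear_in_X2.
have [b0|b0] := eqVneq b 0.
  have cY2 : c * Y ^+ 2 = 1 by apply/eqP; rewrite eq_sym -subr_eq0 -/b b0.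
  rewrite b0 mulr0 qchar0 addr0 cY2 eqxx subrr big1 // => X _.
  rewrite mulr0 eq_sym subr_eq0; suff /negbTE-> : c != Y ^+ 2 by [].
  by apply: contra c2 => /eqP cY; rewrite expr2 {2}cY cY2.
have -> : c * Y ^+ 2 == 1 = false by apply: contraNF b0 => /eqP cY2; rewrite /b cY2 subrr.
under eq_bigr do rewrite (can2_eq (mulfK b0) (divfK b0)).
by rewrite subr0 -natr_card_set card_Fp_sqrt // [qchar (_ / b)]qcharM // qcharV // -qcharM.
Qed.

Lemma edwards_affine_countE (a : 'F_p) : a != 0 -> a ^+ 4 != 1 ->
  (edwards_affine_count a)%:R
  = p%:R - 2 + \sum_Y qchar ((a ^+ 2 - Y ^+ 2) * (1 - a ^+ 2 * Y ^+ 2)) :> algC.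
Proof.
move=> a0 a4; rewrite /edwards_affine_count natr_card_set.
rewrite -(pair_bigA _ (fun X Y => (X ^+ 2 + Y ^+ 2 == a ^+ 2 * (1 + X ^+ 2 * Y ^+ 2))%:R)).
rewrite exchange_big /=.
have a22 : (a ^+ 2) ^+ 2 != 1 by rewrite -exprM.
rewrite (eq_bigr _ (fun Y _ => card_edwards_fiber Y a22)).
have a2 : a ^+ 2 != 0 by rewrite expf_neq0.
have card_inv_sqrt : \sum_Y (a ^+ 2 * Y ^+ 2 == 1)%:R = 2%:R :> algC.
  under eq_bigr do rewrite (can2_eq (mulKf a2) (mulVKf a2)) mulr1 -exprVn.
  by rewrite -natr_card_set card_Fp_sqrt // qchar_sqr ?invr_eq0.
by rewrite sumrB big_split /= sumr_const card_Fp // card_inv_sqrt addrAC.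
Qed.

(* Substitute [u = Y^2], then [u = c y]. *)
Lemma sum_qchar_edwards_legendre (c : 'F_p) : c != 0 -> c ^+ 2 != 1 ->
  \sum_Y qchar ((c - Y ^+ 2) * (1 - c * Y ^+ 2))
  = - qchar c + \sum_y qchar (y * (1 - y) * (1 - c ^+ 2 * y)).
Proof.
move=> c0 c2; rewrite (sum_Fp_sqr p_pr p_odd (fun u => qchar ((c - u) * (1 - c * u)))) /=.
under eq_bigr do rewrite mulrDr mulr1.
rewrite big_split /=; congr (_ + _).
  have factor u : (c - u) * (1 - c * u) = c * ((u - c) * (u - c^-1)) by field.
  under eq_bigr do rewrite factor qcharM //.
  rewrite -mulr_sumr sum_qchar_quadratic ?mulrN1 //.
  by apply: contra c2 => /eqP cV; rewrite expr2 {2}cV mulfV.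
rewrite (reindex_inj (mulfI c0)) /=; apply: eq_bigr => y _.
rewrite -qcharM //.
have -> : (c - c * y) * (1 - c * (c * y)) * (c * y)
          = c ^+ 2 * (y * (1 - y) * (1 - c ^+ 2 * y)) by ring.
by rewrite qcharM // qchar_sqr // mul1r.
Qed.

Lemma edwards_cardE (a : 'F_p) : a != 0 -> a ^+ 4 != 1 ->
  (edwards_card a)%:R = 1 + p%:R + \sum_y qchar (y * (1 - y) * (1 - a ^+ 4 * y)) :> algC.
Proof.
move=> a0 a4; have a2 : a ^+ 2 != 0 by rewrite expf_neq0.
rewrite /edwards_card natrD edwards_affine_countE // sum_qchar_edwards_legendre -?exprM //.
rewrite /edwards_infinity_count natrM card_Fp_sqrt // qchar_sqr //.
by rewrite -[2%:R]/(1 + 1 : algC); ring.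
Qed.

End EdwardsPointCount.

Section HypergeometricSum.

Variable p : nat.
Hypotheses (p_pr : prime p) (p_odd : odd p).
Implicit Type i : Iirr (FpUnits p).

Lemma char_binom_qchar_mchar i :
  char_binom (fun y => qchar y * mchar i y) (mchar i)
  = mchar i (-1) / p%:R * \sum_y qchar y * mchar i (y / (1 - y)).
Proof.
rewrite /char_binom; congr (_ * _); apply: eq_bigr => y _.
by rewrite mcharM mcharV mulrA.
Qed.

Lemma char_binom_sqr_mchar i (x : 'F_p) :
  char_binom (fun y => qchar y * mchar i y) (mchar i)
  * char_binom (fun y => qchar y * mchar i y) (mchar i) * mchar i x
  = (p%:R ^+ 2)^-1 * \sum_y \sum_z
      qchar y * qchar z * mchar i (y / (1 - y) * (z / (1 - z)) * x).
Proof.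
have p0 : p%:R != 0 :> algC by rewrite pnatr_eq0 -lt0n prime_gt0.
have sign2 : mchar i (-1) * mchar i (-1) = 1 by rewrite -mcharM mulrNN mulr1 mchar1.
rewrite char_binom_qchar_mchar; set S := \sum_y qchar y * _.
have -> : mchar i (-1) / p%:R * S * (mchar i (-1) / p%:R * S) * mchar i x
          = mchar i (-1) * mchar i (-1) * (p%:R ^+ 2)^-1 * (S * (S * mchar i x)).
  by field.
rewrite sign2 mul1r /S mulr_suml; congr (_ * _); apply: eq_bigr => y _.
rewrite mulr_suml mulr_sumr; apply: eq_bigr => z _.
by rewrite !mcharM; ring.
Qed.

(* Orthogonality of characters collapses the sum over [chi] in [2F1]. *)
Lemma F21_sum_qchar (x : 'F_p) :
  p%:R * F21 x = \sum_y \sum_z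
    qchar y * qchar z * (y / (1 - y) * (z / (1 - z)) * x == 1)%:R.
Proof.
have p0 : p%:R != 0 :> algC by rewrite pnatr_eq0 -lt0n prime_gt0.
have p1 : p%:R - 1 != 0 :> algC by rewrite subr_eq0 pnatr_eq1 neq_ltn prime_gt1 ?orbT.
have pred_p : (p.-1)%:R = p%:R - 1 :> algC.
  by rewrite -[in RHS](prednK (prime_gt0 p_pr)) -natr1 addrK.
have sum_over_chars y z : \sum_i qchar y * qchar z * mchar i (y / (1 - y) * (z / (1 - z)) * x)
    = (p.-1)%:R * (qchar y * qchar z * (y / (1 - y) * (z / (1 - z)) * x == 1)%:R).
  by rewrite -mulr_sumr sum_mchar // -mulr_natr mulrCA.
rewrite /F21; under eq_bigr do rewrite char_binom_sqr_mchar.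
rewrite -mulr_sumr exchange_big /=.
under eq_bigr => y _ do rewrite exchange_big /=.
under eq_bigr => y _ do under eq_bigr => z _ do rewrite sum_over_chars.
under eq_bigr => y _ do rewrite -mulr_sumr.
by rewrite -mulr_sumr pred_p; field; rewrite p0 p1.
Qed.

Lemma sum_qchar_hypergeometric_fiber (l y : 'F_p) : l != 1 ->
  \sum_z qchar y * qchar z * (y / (1 - y) * (z / (1 - z)) * (1 - l) == 1)%:R
  = qchar (y * (1 - y) * (1 - l * y)).
Proof.
move=> l1.
have [->|y0] := eqVneq y 0.
  by rewrite !mul0r qchar0 big1 // => z _; rewrite !mul0r.
have [->|y1] := eqVneq y 1.
  rewrite subrr invr0 mulr0 !mul0r qchar0 big1 // => z _.
  by rewrite !mul0r eq_sym oner_eq0 mulr0.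
have y1' : 1 - y != 0 by rewrite subr_eq0 eq_sym.
set d := 1 - l * y.
have linear_in_z z : (y / (1 - y) * (z / (1 - z)) * (1 - l) == 1) = (z * d == 1 - y).
  have [->|z1] := eqVneq z 1.
    rewrite subrr invr0 !mulr0 mul0r eq_sym oner_eq0 mul1r; apply/esym/negbTE.
    have -> : d = 1 - y + y * (1 - l) by rewrite /d; ring.
    by rewrite -subr_eq0 addrC addKr mulf_neq0 // subr_eq0 eq_sym.
  have z1' : 1 - z != 0 by rewrite subr_eq0 eq_sym.
  rewrite -subr_eq0 -[RHS]subr_eq0.
  have -> : y / (1 - y) * (z / (1 - z)) * (1 - l) - 1
            = (z * d - (1 - y)) / ((1 - y) * (1 - z)).
    by rewrite /d; field; rewrite y1' z1'.
  by rewrite mulf_eq0 invr_eq0 mulf_eq0 (negbTE y1') (negbTE z1') !orbF.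
under eq_bigr do rewrite linear_in_z.
have [d0|d0] := eqVneq d 0.
  rewrite d0 mulr0 qchar0 big1 // => z _.
  by rewrite mulr0 eq_sym (negbTE y1') mulr0.
under eq_bigr do rewrite (can2_eq (mulfK d0) (divfK d0)).
by rewrite sum_mul_eq_indicator [qchar (_ / d)]qcharM // qcharV // mulrA -!qcharM.
Qed.

End HypergeometricSum.

Theorem theorem1 (p : nat) (hp : prime p) (hodd : odd p) (a : 'F_p)
  (ha : a ^+ 5 != a) :
  (edwards_card a)%:R = 1 + p%:R + p%:R * F21 (1 - a ^+ 4) :> algC.
Proof.
have a0 : a != 0 by apply: contra ha => /eqP ->; rewrite expr0n.
have a4 : a ^+ 4 != 1 by apply: contra ha => /eqP a4; rewrite exprS a4 mulr1.
rewrite edwards_cardE // F21_sum_qchar //; congr (_ + _).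
by apply: eq_bigr => y _; rewrite sum_qchar_hypergeometric_fiber.
Qed.
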